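(* Let $(\gamma_n)_{n\ge 0}$ be a sequence of positive reals satisfying conditions (C1)–(C7) below, and let $(p_n)_{n\ge0}$ be the associated symmetric orthonormal polynomials. Then for every $\omega\in\mathbb{R}$ the limit $\lim_{n\to\infty}\gamma_n\bigl(p_n^2(\omega)+p_{n+1}^2(\omega)\bigr)$ exists. Moreover, for every $B>0$ there exist constants $m_B, M_B$ with $0<m_B<M_B<\infty$ such that for all $\omega$ with $|\omega|\le B$, \[ m_B\le \lim_{n\to\infty}\gamma_n\bigl(p_n^2(\omega)+p_{n+1}^2(\omega)\bigr)\le M_B, \] and the convergence of this limit is uniform on the set $\{\omega: |\omega|\le B\}$.
   Context: Given positive reals $\gamma_n>0$ ($n\ge 0$), set $\gamma_{-1}=1$, $p_{-1}(\omega)=0$, $p_0(\omega)=1$, and define polynomials by the three-term recurrence $\gamma_n p_{n+1}(\omega)=\omega p_n(\omega)-\gamma_{n-1}p_{n-1}(\omega)$ for $n\ge0$; this is a symmetric positive definite orthonormal polynomial family with recursion coefficients $\gamma_n$. Let $\Delta_n=\gamma_{n+1}-\gamma_n$ and $\Delta^2_n=\Delta_{n+1}-\Delta_n$. The conditions are: (C1) $\gamma_n\to\infty$; (C2) $\Delta_n\to 0$; (C3) $(\gamma_n)$ is almost increasing: there exist $n_0,m_0$ such that $\gamma_{n+m}>\gamma_n$ for all $n\ge n_0$ and all $m\ge m_0$; (C4) $\sum_{j\ge0}1/\gamma_j=\infty$; (C5) there exists $\kappa>1$ with $\sum_{j\ge0}\gamma_j^{-\kappa}<\infty$; (C6) $\sum_{n\ge0}|\Delta_n|/\gamma_n^2<\infty$;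 (C7) $\sum_{n\ge0}|\Delta^2_n|/\gamma_n<\infty$. *)

From Stdlib Require Import Reals Lra.
From Coquelicot Require Import Coquelicot.
Open Scope R_scope.

Definition gamma_prev (gamma : nat -> R) (n : nat) : R :=
  match n with O => 1 | S k => gamma k end.

(* pair_p gamma w n = (p_{n-1}(w), p_n(w)), with p_{-1} = 0, p_0 = 1, and
   gamma_n p_{n+1} = w p_n - gamma_{n-1} p_{n-1}. *)
Fixpoint pair_p (gamma : nat -> R) (w : R) (n : nat) : R * R :=
  match n with
  | O => (0, 1)
  | S k => let (a, b) := pair_p gamma w k in
           (b, (w * b - gamma_prev gamma k * a) / gamma k)
  end.

Definition opoly (gamma : nat -> R) (n : nat) (w : R) : R := snd (pair_p gamma w n).

Definition Delta (gamma : nat -> R) (n : nat) : R := gamma (S n) - gamma n.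
Definition Delta2 (gamma : nat -> R) (n : nat) : R :=
  Delta gamma (S n) - Delta gamma n.

Definition cond_C1 (gamma : nat -> R) : Prop := is_lim_seq gamma p_infty.
Definition cond_C2 (gamma : nat -> R) : Prop := is_lim_seq (Delta gamma) 0.
Definition cond_C3 (gamma : nat -> R) : Prop :=
  exists n0 m0 : nat, forall n m : nat, (n0 <= n)%nat -> (m0 <= m)%nat ->
    gamma (n + m)%nat > gamma n.
Definition cond_C4 (gamma : nat -> R) : Prop :=
  is_lim_seq (sum_n (fun j => / gamma j)) p_infty.
Definition cond_C5 (gamma : nat -> R) : Prop :=
  exists kappa : R, kappa > 1 /\ ex_series (fun j => Rpower (gamma j) (- kappa)).
Definition cond_C6 (gamma : nat -> R) : Prop :=
  ex_series (fun n => Rabs (Delta gamma n) / (gamma n) ^ 2).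
Definition cond_C7 (gamma : nat -> R) : Prop :=
  ex_series (fun n => Rabs (Delta2 gamma n) / gamma n).

Definition Fseq (gamma : nat -> R) (w : R) (n : nat) : R :=
  gamma n * ((opoly gamma n w) ^ 2 + (opoly gamma (S n) w) ^ 2).

(* Compare F_n = γ_n (p_n² + p_{n+1}²) with the modified energy
     E_n = F_n - ω p_n p_{n+1} + (Δ_n / 2) (p_{n+1}² - p_n²).
   The correction terms are chosen so that, by the recurrence, E_{n+1} - E_n is a
   combination of Δ²_n/γ_n, Δ_{n+1}/γ_{n+1}² and Δ_n/γ_n² with coefficients of size
   O(F_n) = O(E_n), uniformly for |ω| ≤ B once γ_n is large and |Δ_n| ≤ 1.  By (C6) and
   (C7) these relative increments are summable, so from some index on E_n stays between
   two positive constants and is uniformly Cauchy.  Finally E_n - F_n = O(F_n / γ_n),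
   which tends to 0 uniformly by (C1), so F_n inherits both properties. *)

From Stdlib Require Import Reals Lra Lia Psatz.
From Coquelicot Require Import Coquelicot.
(* Imported last so that [Delta] is [Defs.Delta], not the discriminant from [Reals]. *)
From Pilot Require Import Defs.
Open Scope R_scope.

Fixpoint sum_from (b : nat -> R) (n j : nat) : R :=
  match j with O => 0 | S i => sum_from b n i + b (n + i)%nat end.

Lemma sum_from_S (b : nat -> R) n j : sum_from b n (S j) = sum_n_m b n (n + j).
Proof.
  induction j as [|j IH].
  - rewrite Nat.add_0_r, sum_n_n; simpl; rewrite Nat.add_0_r; ring.
  - change (sum_from b n (S (S j))) with (sum_from b n (S j) + b (n + S j)%nat).
    rewrite IH, Nat.add_succ_r, sum_n_Sm by lia; reflexivity.
Qed.

Lemma sum_from_ge0 (b : nat -> R) : (forall k, 0 <= b k) -> forall n j, 0 <= sum_from b n j.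
Proof.
  intros Hb n j; induction j as [|j IH]; simpl; [lra|].
  pose proof (Hb (n + j)%nat); lra.
Qed.

Lemma sum_from_small (b : nat -> R) : ex_series b ->
  forall eps, 0 < eps -> exists N, forall n j, (N <= n)%nat -> sum_from b n j <= eps.
Proof.
  intros Hb eps Heps.
  destruct (Cauchy_ex_series b Hb (mkposreal eps Heps)) as [N HN].
  exists N; intros n [|j] Hn; simpl; [lra|].
  change (sum_from b n j + b (n + j)%nat) with (sum_from b n (S j)).
  rewrite sum_from_S.
  specialize (HN n (n + j)%nat Hn ltac:(lia)); simpl in HN.
  change (Rabs (sum_n_m b n (n + j)) < eps) in HN.
  pose proof (Rle_abs (sum_n_m b n (n + j))); lra.
Qed.

Lemma rel_incr_bound (u b : nat -> R) (n : nat) :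
  (forall k, (n <= k)%nat -> 0 <= b k) -> 0 <= u n ->
  (forall k, (n <= k)%nat -> Rabs (u (S k) - u k) <= b k * u k) ->
  forall j, sum_from b n j <= 1 / 2 -> Rabs (u (n + j)%nat - u n) <= 2 * u n * sum_from b n j.
Proof.
  intros Hb Hu Hstep j.
  induction j as [|j IH]; intros Hseg; simpl in *.
  - rewrite Nat.add_0_r, Rminus_diag, Rabs_R0; lra.
  - assert (Hbj : 0 <= b (n + j)%nat) by (apply Hb; lia).
    specialize (IH ltac:(lra)).
    pose proof (Hstep (n + j)%nat ltac:(lia)) as Hs.
    assert (Hle : u (n + j)%nat <= 2 * u n) by (apply Rabs_le_between in IH; nra).
    assert (b (n + j)%nat * u (n + j)%nat <= b (n + j)%nat * (2 * u n))
      by (apply Rmult_le_compat_l; lra).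
    rewrite Nat.add_succ_r.
    replace (u (S (n + j)) - u n)
      with ((u (S (n + j)) - u (n + j)%nat) + (u (n + j)%nat - u n)) by ring.
    eapply Rle_trans; [apply Rabs_triang|]; lra.
Qed.

Lemma is_lim_seq_ev_bounds (u : nat -> R) (l a b : R) (N : nat) :
  is_lim_seq u l -> (forall n, (N <= n)%nat -> a <= u n <= b) -> a <= l <= b.
Proof.
  intros Hu Hab; split.
  - apply (is_lim_seq_le_loc (fun _ => a) u a l); [|apply is_lim_seq_const|exact Hu].
    exists N; intros n Hn; apply Hab, Hn.
  - apply (is_lim_seq_le_loc u (fun _ => b) l b); [|exact Hu|apply is_lim_seq_const].
    exists N; intros n Hn; apply Hab, Hn.
Qed.

Section UniformCauchy.

Context {T : Type} (P : T -> Prop).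

Definition unif_cauchy (f : T -> nat -> R) : Prop :=
  forall eps, 0 < eps -> exists N, forall n j x, (N <= n)%nat -> P x ->
    Rabs (f x (n + j)%nat - f x n) <= eps.

Lemma unif_cauchy_perturb (f g : T -> nat -> R) : unif_cauchy f ->
  (forall eps, 0 < eps -> exists N, forall n x, (N <= n)%nat -> P x ->
     Rabs (g x n - f x n) <= eps) ->
  unif_cauchy g.
Proof.
  intros Hf Hgf eps Heps.
  destruct (Hf (eps / 3) ltac:(lra)) as [N1 HN1].
  destruct (Hgf (eps / 3) ltac:(lra)) as [N2 HN2].
  exists (Nat.max N1 N2); intros n j x Hn Hx.
  pose proof (HN1 n j x ltac:(lia) Hx) as Hf_nj.
  pose proof (HN2 (n + j)%nat x ltac:(lia) Hx) as Hgf_nj.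
  pose proof (HN2 n x ltac:(lia) Hx) as Hgf_n.
  apply Rabs_le_between in Hf_nj, Hgf_nj, Hgf_n; apply Rabs_le_between; lra.
Qed.

Lemma unif_cauchy_ex_finite_lim (f : T -> nat -> R) :
  unif_cauchy f -> forall x, P x -> ex_finite_lim_seq (f x).
Proof.
  intros Hf x Hx; apply ex_lim_seq_cauchy_corr; intros [eps Heps].
  destruct (Hf (eps / 3) ltac:(lra)) as [N HN].
  exists N; intros n m Hn Hm; simpl.
  pose proof (HN N (n - N)%nat x (le_n N) Hx) as HnN.
  pose proof (HN N (m - N)%nat x (le_n N) Hx) as HmN.
  replace (N + (n - N))%nat with n in HnN by lia.
  replace (N + (m - N))%nat with m in HmN by lia.
  apply Rabs_le_between in HnN, HmN; apply Rabs_def1; lra.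
Qed.

Lemma unif_cauchy_cvg (f : T -> nat -> R) : unif_cauchy f ->
  forall eps, 0 < eps -> exists N, forall n x, (N <= n)%nat -> P x ->
    Rabs (f x n - real (Lim_seq (f x))) <= eps.
Proof.
  intros Hf eps Heps.
  destruct (Hf eps Heps) as [N HN].
  exists N; intros n x Hn Hx.
  pose proof (Lim_seq_correct' _ (unif_cauchy_ex_finite_lim f Hf x Hx)) as Hlim.
  assert (Hball : f x n - eps <= real (Lim_seq (f x)) <= f x n + eps).
  { apply (is_lim_seq_ev_bounds (f x) _ _ _ n Hlim); intros m Hm.
    pose proof (HN n (m - n)%nat x Hn Hx) as Hm'.
    replace (n + (m - n))%nat with m in Hm' by lia.
    apply Rabs_le_between in Hm'; lra. }
  apply Rabs_le_between; lra.
Qed.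

Lemma rel_incr_unif_cauchy (u : T -> nat -> R) (b : nat -> R) (N : nat) (M : R) :
  (forall k, 0 <= b k) -> ex_series b ->
  (forall x k, P x -> (N <= k)%nat ->
     0 <= u x k <= M /\ Rabs (u x (S k) - u x k) <= b k * u x k) ->
  unif_cauchy u.
Proof.
  intros Hb Hbs Hu eps Heps.
  set (C := 2 * Rabs M + 1).
  assert (HC : 0 < C) by (pose proof (Rabs_pos M); unfold C; lra).
  assert (Ht : 0 < Rmin (1 / 2) (eps / C))
    by (apply Rmin_pos; [lra | apply Rdiv_lt_0_compat; lra]).
  destruct (sum_from_small b Hbs _ Ht) as [Nt HNt].
  exists (Nat.max N Nt); intros n j x Hn Hx.
  destruct (Hu x n Hx ltac:(lia)) as [Hun _].
  assert (Hseg : sum_from b n j <= Rmin (1 / 2) (eps / C)) by (apply HNt; lia).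
  pose proof (Rmin_l (1 / 2) (eps / C)); pose proof (Rmin_r (1 / 2) (eps / C)).
  assert (Hincr : Rabs (u x (n + j)%nat - u x n) <= 2 * u x n * sum_from b n j).
  { apply rel_incr_bound; [intros; apply Hb | lra | | lra].
    intros k Hk; apply (Hu x k Hx); lia. }
  pose proof (sum_from_ge0 b Hb n j).
  assert (2 * u x n <= C) by (pose proof (Rle_abs M); unfold C; lra).
  assert (2 * u x n * sum_from b n j <= C * (eps / C)) by (apply Rmult_le_compat; lra).
  replace (C * (eps / C)) with eps in * by (field; lra); lra.
Qed.

End UniformCauchy.

Lemma Rabs_mult_le_sum_sq (x y : R) : Rabs (x * y) <= (x ^ 2 + y ^ 2) / 2.
Proof.
  rewrite Rabs_mult, <- (pow2_abs x), <- (pow2_abs y).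
  pose proof (pow2_ge_0 (Rabs x - Rabs y)); nra.
Qed.

Lemma Rabs_sub_sq_le (x y : R) : Rabs (y ^ 2 - x ^ 2) <= x ^ 2 + y ^ 2.
Proof. apply Rabs_le; split; nra. Qed.

Lemma sq_le_of_Rabs_le (w B : R) : Rabs w <= B -> w ^ 2 <= B ^ 2.
Proof. intros Hw; rewrite <- (pow2_abs w); pose proof (Rabs_pos w); nra. Qed.

Lemma opoly_0 g w : opoly g 0 w = 1.
Proof. reflexivity. Qed.

Lemma opoly_1 g w : opoly g 1 w = w / g 0%nat.
Proof. unfold opoly; simpl; unfold Rdiv; ring. Qed.

Lemma opoly_SS g w n :
  opoly g (S (S n)) w = (w * opoly g (S n) w - g n * opoly g n w) / g (S n).
Proof.
  unfold opoly; simpl pair_p at 1.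
  destruct (pair_p g w (S n)) as [a b] eqn:E; simpl.
  simpl in E; destruct (pair_p g w n) as [c d]; injection E as <- <-; reflexivity.
Qed.

Definition psq (g : nat -> R) (w : R) (n : nat) : R :=
  opoly g n w ^ 2 + opoly g (S n) w ^ 2.

Lemma psq_ge0 g w n : 0 <= psq g w n.
Proof. unfold psq; nra. Qed.

Lemma sq_div_le (w B a c u v : R) : Rabs w <= B -> 0 < c ->
  ((w * u - a * v) / c) ^ 2 <= 2 * (B ^ 2 + a ^ 2) / c ^ 2 * (u ^ 2 + v ^ 2).
Proof.
  intros Hw Hc; pose proof (sq_le_of_Rabs_le w B Hw).
  assert (Hnum : (w * u - a * v) ^ 2 <= 2 * (B ^ 2 + a ^ 2) * (u ^ 2 + v ^ 2)).
  { pose proof (pow2_ge_0 (w * u + a * v)).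
    assert (w ^ 2 * u ^ 2 <= B ^ 2 * u ^ 2) by (apply Rmult_le_compat_r; nra).
    nra. }
  replace (((w * u - a * v) / c) ^ 2) with ((w * u - a * v) ^ 2 / c ^ 2) by (field; lra).
  replace (2 * (B ^ 2 + a ^ 2) / c ^ 2 * (u ^ 2 + v ^ 2))
    with (2 * (B ^ 2 + a ^ 2) * (u ^ 2 + v ^ 2) / c ^ 2) by (field; lra).
  apply Rmult_le_compat_r; [apply Rlt_le, Rinv_0_lt_compat; nra | exact Hnum].
Qed.

Lemma psq_S_ratio g B n : (forall k, 0 < g k) ->
  exists K, 1 <= K /\ forall w, Rabs w <= B ->
    psq g w (S n) <= K * psq g w n /\ psq g w n <= K * psq g w (S n).
Proof.
  intros Hg; pose proof (Hg n); pose proof (Hg (S n)).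
  set (k1 := 2 * (B ^ 2 + g n ^ 2) / g (S n) ^ 2).
  set (k2 := 2 * (B ^ 2 + g (S n) ^ 2) / g n ^ 2).
  assert (Hk1 : 0 <= k1) by (apply Rdiv_le_0_compat; nra).
  assert (Hk2 : 0 <= k2) by (apply Rdiv_le_0_compat; nra).
  exists (1 + k1 + k2); split; [lra|]; intros w Hw.
  pose proof (psq_ge0 g w n); pose proof (psq_ge0 g w (S n)).
  unfold psq in *.
  set (x := opoly g n w) in *; set (y := opoly g (S n) w) in *.
  assert (Hz : opoly g (S (S n)) w = (w * y - g n * x) / g (S n)) by apply opoly_SS.
  set (z := opoly g (S (S n)) w) in *.
  assert (Hx : x = (w * y - g (S n) * z) / g n) by (rewrite Hz; field; lra).
  pose proof (sq_div_le w B (g n) (g (S n)) y x Hw ltac:(lra)) as Hz2.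
  pose proof (sq_div_le w B (g (S n)) (g n) y z Hw ltac:(lra)) as Hx2.
  rewrite <- Hz in Hz2; rewrite <- Hx in Hx2; fold k1 in Hz2; fold k2 in Hx2.
  split; nra.
Qed.

Lemma psq_unif_bounds g B n : (forall k, 0 < g k) ->
  exists lo hi, 0 < lo /\ forall w, Rabs w <= B -> lo <= psq g w n <= hi.
Proof.
  intros Hg; induction n as [|n IH].
  - exists 1, (1 + (B / g 0%nat) ^ 2); split; [lra|]; intros w Hw.
    unfold psq; rewrite opoly_0, opoly_1.
    pose proof (Hg 0%nat).
    assert ((w / g 0%nat) ^ 2 <= (B / g 0%nat) ^ 2).
    { apply sq_le_of_Rabs_le; unfold Rdiv.
      rewrite Rabs_mult, (Rabs_right (/ g 0%nat))
        by (apply Rle_ge, Rlt_le, Rinv_0_lt_compat; lra).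
      apply Rmult_le_compat_r; [apply Rlt_le, Rinv_0_lt_compat|]; lra. }
    split; nra.
  - destruct IH as (lo & hi & Hlo & Hb).
    destruct (psq_S_ratio g B n Hg) as (K & HK & HKw).
    exists (lo / K), (K * hi); split; [apply Rdiv_lt_0_compat; lra|]; intros w Hw.
    destruct (HKw w Hw) as [H1 H2]; destruct (Hb w Hw).
    split.
    + apply (Rmult_le_reg_l K); [lra|].
      replace (K * (lo / K)) with lo by (field; lra); lra.
    + pose proof (psq_ge0 g w n); nra.
Qed.

Definition energy (g : nat -> R) (w : R) (n : nat) : R :=
  Fseq g w n - w * opoly g n w * opoly g (S n) w
  + Delta g n / 2 * (opoly g (S n) w ^ 2 - opoly g n w ^ 2).

Lemma energy_sub_Fseq_le g w n :
  Rabs (energy g w n - Fseq g w n) <= (Rabs w + Rabs (Delta g n)) / 2 * psq g w n.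
Proof.
  unfold energy, psq.
  set (x := opoly g n w); set (y := opoly g (S n) w).
  replace (Fseq g w n - w * x * y + Delta g n / 2 * (y ^ 2 - x ^ 2) - Fseq g w n)
    with (- w * (x * y) + Delta g n / 2 * (y ^ 2 - x ^ 2)) by ring.
  eapply Rle_trans; [apply Rabs_triang|].
  unfold Rdiv; rewrite !Rabs_mult, Rabs_Ropp, Rabs_inv, (Rabs_right 2) by lra.
  pose proof (Rabs_mult_le_sum_sq x y) as Hxy; rewrite Rabs_mult in Hxy.
  pose proof (Rabs_sub_sq_le x y).
  pose proof (Rabs_pos w); pose proof (Rabs_pos (Delta g n)).
  nra.
Qed.

Lemma energy_bounds g w n : Rabs w + Rabs (Delta g n) <= g n ->
  Fseq g w n / 2 <= energy g w n <= 3 / 2 * Fseq g w n.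
Proof.
  intros Hgn; pose proof (energy_sub_Fseq_le g w n) as Hdiff.
  pose proof (psq_ge0 g w n).
  change (Fseq g w n) with (g n * psq g w n) in *.
  apply Rabs_le_between in Hdiff.
  assert ((Rabs w + Rabs (Delta g n)) / 2 * psq g w n <= g n / 2 * psq g w n)
    by (apply Rmult_le_compat_r; lra).
  lra.
Qed.

(* (a, a1, a2) = (γ_n, γ_{n+1}, γ_{n+2}) and (x, y, z) = (p_n, p_{n+1}, p_{n+2}). *)
Lemma energy_step_identity (a a1 a2 w x y : R) : a <> 0 -> a1 <> 0 ->
  let z := (w * y - a * x) / a1 in
  (a1 * (y ^ 2 + z ^ 2) - w * y * z + (a2 - a1) / 2 * (z ^ 2 - y ^ 2))
  - (a * (x ^ 2 + y ^ 2) - w * x * y + (a1 - a) / 2 * (y ^ 2 - x ^ 2))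
  = ((a2 - a1) - (a1 - a)) / a * (- a / 2 * (y ^ 2 - x ^ 2))
    + (a2 - a1) / a1 ^ 2 * ((w ^ 2 * y ^ 2 - 2 * a * w * x * y - (a1 - a) * (a + a1) * x ^ 2) / 2)
    + (a1 - a) / a ^ 2 * (a ^ 2 / a1 * ((a1 - a) * x ^ 2 + w * x * y)).
Proof. intros Ha Ha1 z; unfold z; field; auto. Qed.

Section IncrementTerms.

Variables (a a1 w x y B : R).
Hypotheses (Ha : B + 2 <= a) (Ha1 : Rabs (a1 - a) <= 1) (Hw : Rabs w <= B).

Lemma B_ge0 : 0 <= B.
Proof. pose proof (Rabs_pos w); lra. Qed.

Lemma Rabs_wxy_le : Rabs (w * x * y) <= B * ((x ^ 2 + y ^ 2) / 2).
Proof.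
  rewrite Rmult_assoc, Rabs_mult.
  apply Rmult_le_compat; [apply Rabs_pos | apply Rabs_pos | exact Hw | ].
  apply Rabs_mult_le_sum_sq.
Qed.

Lemma incr_term1_le : Rabs (- a / 2 * (y ^ 2 - x ^ 2)) <= (B ^ 2 + B + 4) * a * (x ^ 2 + y ^ 2).
Proof.
  pose proof B_ge0; pose proof (Rabs_sub_sq_le x y).
  rewrite Rabs_mult, Rabs_div, Rabs_Ropp, (Rabs_right a), (Rabs_right 2) by lra.
  assert (a / 2 * Rabs (y ^ 2 - x ^ 2) <= a / 2 * (x ^ 2 + y ^ 2))
    by (apply Rmult_le_compat_l; lra).
  assert (0 <= a * (x ^ 2 + y ^ 2)) by (apply Rmult_le_pos; nra).
  nra.
Qed.

Lemma incr_term2_le :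
  Rabs ((w ^ 2 * y ^ 2 - 2 * a * w * x * y - (a1 - a) * (a + a1) * x ^ 2) / 2)
  <= (B ^ 2 + B + 4) * a * (x ^ 2 + y ^ 2).
Proof.
  pose proof B_ge0 as HB; pose proof Rabs_wxy_le as Hwxy.
  pose proof (sq_le_of_Rabs_le w B Hw) as Hw2.
  apply Rabs_le_between in Ha1.
  assert (Hx2 : 0 <= x ^ 2) by nra; assert (Hy2 : 0 <= y ^ 2) by nra.
  set (s := x ^ 2 + y ^ 2) in *.
  assert (Hs : 0 <= a * s) by (apply Rmult_le_pos; unfold s; lra).
  assert (T1 : 0 <= w ^ 2 * y ^ 2 <= B ^ 2 * (a * s)).
  { split; [apply Rmult_le_pos; nra|].
    apply Rmult_le_compat; try nra; unfold s; nra. }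
  assert (T2 : Rabs (2 * a * w * x * y) <= B * (a * s)).
  { replace (2 * a * w * x * y) with (2 * a * (w * x * y)) by ring.
    rewrite Rabs_mult, (Rabs_right (2 * a)) by lra.
    apply Rmult_le_compat_l with (r := 2 * a) in Hwxy; [nra | lra]. }
  assert (T3 : Rabs ((a1 - a) * (a + a1) * x ^ 2) <= 3 * (a * s)).
  { rewrite !Rabs_mult, (Rabs_right (a + a1)), (Rabs_right (x ^ 2)) by lra.
    assert (Rabs (a1 - a) * (a + a1) <= 1 * (3 * a))
      by (apply Rmult_le_compat; [apply Rabs_pos | lra | apply Rabs_le | ]; lra).
    assert (x ^ 2 <= s) by (unfold s; lra).
    nra. }
  apply Rabs_le_between in T2, T3; apply Rabs_le_between; nra.
Qed.

Lemma incr_term3_le :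
  Rabs (a ^ 2 / a1 * ((a1 - a) * x ^ 2 + w * x * y)) <= (B ^ 2 + B + 4) * a * (x ^ 2 + y ^ 2).
Proof.
  pose proof B_ge0 as HB; pose proof Rabs_wxy_le as Hwxy.
  apply Rabs_le_between in Ha1.
  assert (Hx2 : 0 <= x ^ 2) by nra; assert (Hy2 : 0 <= y ^ 2) by nra.
  set (s := x ^ 2 + y ^ 2) in *.
  assert (Hs : 0 <= a * s) by (apply Rmult_le_pos; unfold s; lra).
  assert (Hq : 0 <= a ^ 2 / a1 <= 2 * a).
  { split; [apply Rdiv_le_0_compat; nra|].
    apply (Rmult_le_reg_r a1); [lra|]; unfold Rdiv; rewrite Rmult_assoc, Rinv_l by lra; nra. }
  assert (Hr : Rabs ((a1 - a) * x ^ 2 + w * x * y) <= (1 + B / 2) * s).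
  { eapply Rle_trans; [apply Rabs_triang|].
    rewrite Rabs_mult, (Rabs_right (x ^ 2)) by lra.
    assert (Rabs (a1 - a) * x ^ 2 <= 1 * x ^ 2)
      by (apply Rmult_le_compat_r; [lra | apply Rabs_le; lra]).
    unfold s in *; lra. }
  rewrite Rabs_mult, (Rabs_right (a ^ 2 / a1)) by lra.
  apply Rle_trans with (2 * a * ((1 + B / 2) * s));
    [apply Rmult_le_compat; [lra | apply Rabs_pos | apply Hq | exact Hr] | nra].
Qed.

End IncrementTerms.

Definition energy_weight (g : nat -> R) (n : nat) : R :=
  Rabs (Delta2 g n) / g n + Rabs (Delta g (S n)) / g (S n) ^ 2 + Rabs (Delta g n) / g n ^ 2.

Lemma energy_weight_ge0 g n : (forall k, 0 < g k) -> 0 <= energy_weight g n.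
Proof.
  intros Hg; pose proof (Hg n); pose proof (Hg (S n)); unfold energy_weight.
  repeat apply Rplus_le_le_0_compat; apply Rdiv_le_0_compat; try apply Rabs_pos; nra.
Qed.

Lemma ex_series_energy_weight g : cond_C6 g -> cond_C7 g -> ex_series (energy_weight g).
Proof.
  intros H6 H7; unfold energy_weight.
  apply (ex_series_plus (fun n => Rabs (Delta2 g n) / g n + Rabs (Delta g (S n)) / g (S n) ^ 2)
           (fun n => Rabs (Delta g n) / g n ^ 2)); [|exact H6].
  apply (ex_series_plus (fun n => Rabs (Delta2 g n) / g n)
           (fun n => Rabs (Delta g (S n)) / g (S n) ^ 2)); [exact H7|].
  apply (ex_series_incr_1 (fun n => Rabs (Delta g n) / g n ^ 2)); exact H6.
Qed.

Lemma Rabs_div_mult_le (c d X K : R) : 0 < d -> Rabs X <= K -> Rabs (c / d * X) <= Rabs c / d * K.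
Proof.
  intros Hd HX; rewrite Rabs_mult, Rabs_div, (Rabs_right d) by lra.
  apply Rmult_le_compat_l; [apply Rdiv_le_0_compat; [apply Rabs_pos | lra] | exact HX].
Qed.

Lemma energy_step_le g w n B : (forall k, 0 < g k) ->
  B + 2 <= g n -> Rabs (Delta g n) <= 1 -> Rabs w <= B ->
  Rabs (energy g w (S n) - energy g w n) <= (B ^ 2 + B + 4) * energy_weight g n * Fseq g w n.
Proof.
  intros Hg Hgn Hd Hw; pose proof (Hg n); pose proof (Hg (S n)).
  unfold energy, Fseq, energy_weight, Delta2, Delta in *; rewrite opoly_SS.
  rewrite energy_step_identity by lra.
  set (x := opoly g n w); set (y := opoly g (S n) w).
  pose proof (incr_term1_le (g n) w x y B Hgn Hw) as T1.
  pose proof (incr_term2_le (g n) (g (S n)) w x y B Hgn Hd Hw) as T2.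
  pose proof (incr_term3_le (g n) (g (S n)) w x y B Hgn Hd Hw) as T3.
  eapply Rle_trans; [apply Rabs_triang|].
  eapply Rle_trans; [apply Rplus_le_compat_r, Rabs_triang|].
  eapply Rle_trans.
  { apply Rplus_le_compat; [apply Rplus_le_compat|];
      apply Rabs_div_mult_le; [lra | exact T1 | nra | exact T2 | nra | exact T3]. }
  apply Req_le; ring.
Qed.

Lemma eventually_regular g B : cond_C1 g -> cond_C2 g ->
  exists N, forall k, (N <= k)%nat -> B + 2 <= g k /\ Rabs (Delta g k) <= 1.
Proof.
  intros H1 H2; apply is_lim_seq_spec in H1, H2.
  destruct (H1 (B + 2)) as [N1 HN1]; destruct (H2 (mkposreal 1 Rlt_0_1)) as [N2 HN2].
  exists (Nat.max N1 N2); intros k Hk.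
  specialize (HN1 k ltac:(lia)); specialize (HN2 k ltac:(lia)); simpl in HN2.
  rewrite Rminus_0_r in HN2; split; lra.
Qed.

Lemma energy_rel_step g w n B : (forall k, 0 < g k) ->
  B + 2 <= g n -> Rabs (Delta g n) <= 1 -> Rabs w <= B ->
  0 <= energy g w n /\
  Rabs (energy g w (S n) - energy g w n)
  <= 2 * (B ^ 2 + B + 4) * energy_weight g n * energy g w n.
Proof.
  intros Hg Hgn Hd Hw.
  pose proof (energy_step_le g w n B Hg Hgn Hd Hw) as Hstep.
  pose proof (energy_bounds g w n ltac:(lra)) as HE.
  assert (HF : 0 <= Fseq g w n) by (apply Rmult_le_pos; [pose proof (Hg n) | apply psq_ge0]; lra).
  assert (HW : 0 <= (B ^ 2 + B + 4) * energy_weight g n)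
    by (apply Rmult_le_pos; [pose proof (Rabs_pos w); nra | apply energy_weight_ge0, Hg]).
  split; [lra|].
  eapply Rle_trans; [exact Hstep|].
  replace (2 * (B ^ 2 + B + 4) * energy_weight g n * energy g w n)
    with ((B ^ 2 + B + 4) * energy_weight g n * (2 * energy g w n)) by ring.
  apply Rmult_le_compat_l; lra.
Qed.

Lemma ex_series_scal_energy_weight g c : cond_C6 g -> cond_C7 g ->
  ex_series (fun k => c * energy_weight g k).
Proof.
  intros H6 H7.
  exact (ex_series_scal_l c (energy_weight g) (ex_series_energy_weight g H6 H7)).
Qed.

Section EnergyFamily.

Variables (g : nat -> R) (B : R).
Hypotheses (Hg : forall k, 0 < g k) (H1 : cond_C1 g) (H2 : cond_C2 g)
  (H6 : cond_C6 g) (H7 : cond_C7 g) (HB : 0 <= B).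

Lemma energy_unif_bounds : exists N lo hi, 0 < lo /\
  forall n w, (N <= n)%nat -> Rabs w <= B -> lo <= energy g w n <= hi.
Proof.
  destruct (eventually_regular g B H1 H2) as [N0 HN0].
  set (b := fun k => 2 * (B ^ 2 + B + 4) * energy_weight g k).
  assert (Hb : forall k, 0 <= b k)
    by (intros k; apply Rmult_le_pos; [nra | apply energy_weight_ge0, Hg]).
  destruct (sum_from_small b (ex_series_scal_energy_weight g _ H6 H7) (1 / 4) ltac:(lra))
    as [Nt HNt].
  set (N := Nat.max N0 Nt).
  assert (HN : (N0 <= N /\ Nt <= N)%nat) by lia; clearbody N.
  destruct (psq_unif_bounds g B N Hg) as (lo & hi & Hlo & Hpsq).
  pose proof (Hg N).
  exists N, (g N * lo / 4), (9 / 4 * (g N * hi)); split; [nra|]; intros n w Hn Hw.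
  assert (HF : g N * lo <= Fseq g w N <= g N * hi)
    by (change (Fseq g w N) with (g N * psq g w N); destruct (Hpsq w Hw);
        split; apply Rmult_le_compat_l; lra).
  destruct (HN0 N ltac:(lia)) as [HgN HdN].
  pose proof (energy_bounds g w N ltac:(lra)) as HEN.
  assert (Hincr : Rabs (energy g w (N + (n - N))%nat - energy g w N)
                  <= 2 * energy g w N * sum_from b N (n - N)).
  { apply rel_incr_bound; [intros; apply Hb | lra | | pose proof (HNt N (n - N)%nat ltac:(lia)); lra].
    intros k Hk; destruct (HN0 k ltac:(lia)).
    apply (energy_rel_step g w k B Hg); assumption. }
  replace (N + (n - N))%nat with n in Hincr by lia.
  pose proof (HNt N (n - N)%nat ltac:(lia)).
  assert (2 * energy g w N * sum_from b N (n - N) <= 2 * energy g w N * (1 / 4))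
    by (apply Rmult_le_compat_l; lra).
  apply Rabs_le_between in Hincr; split; lra.
Qed.
Lemma energy_unif_cauchy : unif_cauchy (fun w => Rabs w <= B) (energy g).
Proof.
  destruct (eventually_regular g B H1 H2) as [N0 HN0].
  destruct energy_unif_bounds as (N & lo & hi & Hlo & HE).
  apply (rel_incr_unif_cauchy _ _ (fun k => 2 * (B ^ 2 + B + 4) * energy_weight g k)
           (Nat.max N0 N) hi).
  - intros k; apply Rmult_le_pos; [nra | apply energy_weight_ge0, Hg].
  - apply ex_series_scal_energy_weight; assumption.
  - intros w k Hw Hk; destruct (HN0 k ltac:(lia)) as [Hgk Hdk].
    destruct (HE k w ltac:(lia) Hw).
    destruct (energy_rel_step g w k B Hg Hgk Hdk Hw) as [_ Hstep].
    split; [lra | exact Hstep].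
Qed.

Lemma Fseq_unif_bounds_cauchy : exists N m M, 0 < m < M /\
  (forall n w, (N <= n)%nat -> Rabs w <= B -> m <= Fseq g w n <= M) /\
  unif_cauchy (fun w => Rabs w <= B) (Fseq g).
Proof.
  destruct (eventually_regular g B H1 H2) as [N0 HN0].
  destruct energy_unif_bounds as (N & lo & hi & Hlo & HE).
  assert (HF : forall n w, (Nat.max N0 N <= n)%nat -> Rabs w <= B ->
             2 / 3 * lo <= Fseq g w n <= 2 * hi).
  { intros n w Hn Hw; destruct (HN0 n ltac:(lia)) as [Hgn Hdn].
    pose proof (energy_bounds g w n ltac:(lra)); pose proof (HE n w ltac:(lia) Hw); lra. }
  assert (Hlohi : lo <= hi)
    by (destruct (HE (Nat.max N0 N) 0 ltac:(lia) ltac:(rewrite Rabs_R0; lra)); lra).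
  exists (Nat.max N0 N), (2 / 3 * lo), (2 * hi); split; [lra|]; split; [exact HF|].
  apply (unif_cauchy_perturb _ (energy g) (Fseq g) energy_unif_cauchy).
  intros eps Heps.
  apply is_lim_seq_spec in H1.
  destruct (H1 ((B + 1) * hi / eps)) as [Ng HNg].
  exists (Nat.max (Nat.max N0 N) Ng); intros n w Hn Hw.
  destruct (HN0 n ltac:(lia)) as [Hgn Hdn]; specialize (HNg n ltac:(lia)).
  pose proof (HF n w ltac:(lia) Hw) as HFn.
  pose proof (energy_sub_Fseq_le g w n) as Hdiff; rewrite <- Rabs_Ropp in Hdiff.
  replace (- (energy g w n - Fseq g w n)) with (Fseq g w n - energy g w n) in Hdiff by ring.
  change (Fseq g w n) with (g n * psq g w n) in HFn.
  pose proof (psq_ge0 g w n).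
  assert (Hdiff' : g n * Rabs (Fseq g w n - energy g w n) <= (B + 1) * hi).
  { apply Rle_trans with (g n * ((Rabs w + Rabs (Delta g n)) / 2 * psq g w n));
      [apply Rmult_le_compat_l; lra | nra]. }
  apply (Rmult_le_reg_l (g n)); [lra|].
  apply Rmult_lt_compat_r with (r := eps) in HNg; [|lra].
  replace ((B + 1) * hi / eps * eps) with ((B + 1) * hi) in HNg by (field; lra).
  lra.
Qed.

End EnergyFamily.

Theorem theorem2 (gamma : nat -> R)
  (Hpos : forall n, 0 < gamma n)
  (H1 : cond_C1 gamma) (H2 : cond_C2 gamma) (H3 : cond_C3 gamma) (H4 : cond_C4 gamma)
  (H5 : cond_C5 gamma) (H6 : cond_C6 gamma) (H7 : cond_C7 gamma) :
  (forall w : R, ex_finite_lim_seq (Fseq gamma w)) /\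
  (forall B : R, 0 < B ->
     exists mB MB : R, 0 < mB /\ mB < MB /\
       (forall w : R, Rabs w <= B ->
          mB <= real (Lim_seq (Fseq gamma w)) <= MB) /\
       (forall eps : R, 0 < eps -> exists N : nat, forall n : nat, (N <= n)%nat ->
          forall w : R, Rabs w <= B ->
            Rabs (Fseq gamma w n - real (Lim_seq (Fseq gamma w))) < eps)).
Proof.
  split.
  - intros w.
    destruct (Fseq_unif_bounds_cauchy gamma (Rabs w) Hpos H1 H2 H6 H7 (Rabs_pos w))
      as (_ & _ & _ & _ & _ & Hcauchy).
    exact (unif_cauchy_ex_finite_lim _ _ Hcauchy w (Rle_refl _)).
  - intros B HB.
    destruct (Fseq_unif_bounds_cauchy gamma B Hpos H1 H2 H6 H7 (Rlt_le _ _ HB))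
      as (N & m & M & Hm & HF & Hcauchy).
    exists m, M; split; [lra|]; split; [lra|]; split.
    + intros w Hw.
      apply (is_lim_seq_ev_bounds (Fseq gamma w) _ m M N); [|intros n Hn; exact (HF n w Hn Hw)].
      apply Lim_seq_correct', (unif_cauchy_ex_finite_lim _ _ Hcauchy w Hw).
    + intros eps Heps.
      destruct (unif_cauchy_cvg _ _ Hcauchy (eps / 2) ltac:(lra)) as [N' HN'].
      exists N'; intros n Hn w Hw; specialize (HN' n w Hn Hw); lra.
Qed.
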